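(* Let $G=(V,E)$ be a finite simple graph and $e\in E$. Let $G-e$ denote the graph obtained from $G$ by removing the edge $e$ (keeping all vertices). Then $$\gamma_{coe}(G)-2\leq \gamma_{coe}(G-e)\leq \gamma_{coe}(G)+2.$$
   Context: All graphs are finite and simple. For a graph $G=(V,E)$ and $v\in V$, $\deg(v)$ is the number of neighbours of $v$. A set $D\subseteq V$ is a dominating set if every vertex of $V\setminus D$ is adjacent to at least one vertex of $D$. A dominating set $D$ is a co-even dominating set if $\deg(v)$ is even for every $v\in V\setminus D$ (degrees taken in the graph under consideration). The co-even domination number $\gamma_{coe}(G)$ is the minimum cardinality of a co-even dominating set of $G$. *)

From mathcomp Require Import all_boot.
Set Implicit Arguments. Unset Strict Implicit. Unset Printing Implicit Defensive.

Definition simple_graph (T : finType) (g : rel T) : Prop :=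
  symmetric g /\ irreflexive g.

Definition deg (T : finType) (g : rel T) (v : T) : nat := #|[set w | g v w]|.

Definition dominating (T : finType) (g : rel T) (D : {set T}) : bool :=
  [forall v, (v \notin D) ==> [exists u in D, g v u]].

Definition coeven_dominating (T : finType) (g : rel T) (D : {set T}) : bool :=
  dominating g D && [forall v, (v \notin D) ==> ~~ odd (deg g v)].

(* The whole vertex set is always co-even dominating, so the minimum exists;
   #|T| is used as the neutral element of the min. *)
Definition gamma_coe (T : finType) (g : rel T) : nat :=
  \big[minn/#|T|]_(D : {set T} | coeven_dominating g D) #|D|.

Definition remove_edge (T : finType) (g : rel T) (a b : T) : rel T :=
  fun x y => g x y && ~~ (((x == a) && (y == b)) || ((x == b) && (y == a))).

From mathcomp Require Import all_boot all_order.
Import Order.TTheory.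

(* Deleting the edge ab changes only the neighbourhoods, hence the degrees, of
   a and b.  So if D is co-even dominating in one graph, D :|: [set a; b] is
   co-even dominating in the other: every vertex outside it keeps its
   neighbours in D and its even degree.  Comparing minimum sets in both
   directions gives the bound of 2. *)

Section CoevenDominationNumber.
Context {T : finType} (g : rel T).

Lemma coeven_dominatingT : coeven_dominating g setT.
Proof. by apply/andP; split; apply/forallP=> v; rewrite in_setT. Qed.

Lemma gamma_coe_le_card {D : {set T}} :
  coeven_dominating g D -> gamma_coe g <= #|D|.
Proof.
move=> coeD; rewrite /gamma_coe -minEnat.
exact: (bigmin_le_cond _ (fun E : {set T} => #|E|) coeD).
Qed.

Lemma gamma_coe_attained :
  exists2 D : {set T}, coeven_dominating g D & #|D| = gamma_coe g.
Proof.
rewrite /gamma_coe; elim/big_ind: _ => [|m n [D coeD <-] [E coeE <-]|D coeD].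
- by exists setT; rewrite ?cardsT //; apply: coeven_dominatingT.
- by rewrite /minn; case: ltnP => _; [exists D | exists E].
- by exists D.
Qed.

End CoevenDominationNumber.

Lemma coeven_dominating_setU2 {T : finType} {g h : rel T} {a b : T}
    {D : {set T}} :
  (forall x, x \notin [set a; b] -> h x =1 g x) ->
  coeven_dominating g D -> coeven_dominating h (D :|: [set a; b]).
Proof.
move=> eq_hg /andP[/forallP domD /forallP evenD].
apply/andP; split; apply/forallP=> v; rewrite in_setU negb_or;
  apply/implyP=> /andP[vD vab].
- have /existsP[u /andP[uD gvu]] := implyP (domD v) vD.
  by apply/existsP; exists u; rewrite in_setU uD (eq_hg v vab).
- have deg_hv : deg h v = deg g v.
    by apply: eq_card => w; rewrite !inE (eq_hg v vab).
  by rewrite deg_hv; apply: (implyP (evenD v)).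
Qed.

Lemma gamma_coe_le_add2 {T : finType} (g h : rel T) (a b : T) :
  (forall x, x \notin [set a; b] -> h x =1 g x) ->
  gamma_coe h <= gamma_coe g + 2.
Proof.
move=> eq_hg; have [D coeD <-] := gamma_coe_attained g.
apply: leq_trans (gamma_coe_le_card _ (coeven_dominating_setU2 eq_hg coeD)) _.
apply: leq_trans (leq_card_setU D [set a; b]) _.
by rewrite leq_add2l cards2; case: (a != b).
Qed.

Lemma remove_edge_off {T : finType} (g : rel T) (a b x : T) :
  x \notin [set a; b] -> remove_edge g a b x =1 g x.
Proof.
by rewrite !inE negb_or => /andP[/negbTE xa /negbTE xb] y;
  rewrite /remove_edge xa xb andbT.
Qed.

Theorem mainTheorem3 (T : finType) (g : rel T) (a b : T) :
  simple_graph g -> g a b ->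
  gamma_coe g - 2 <= gamma_coe (remove_edge g a b) /\
  gamma_coe (remove_edge g a b) <= gamma_coe g + 2.
Proof.
move=> _ _; have eq_off := remove_edge_off g a b.
split; last exact: gamma_coe_le_add2 eq_off.
rewrite leq_subLR addnC; apply: (gamma_coe_le_add2 _ _ a b) => x xab y.
by rewrite (eq_off x xab).
Qed.
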